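(* Let $A_1$ and $B_1$ be arrays with $n$ columns, and suppose that $A_1$ and $B_1$ are $\phi$-equivalent with respect to the completely filled $m\times n$ array $J_{m,n}$, where $\phi$ is the bishop's move function. Then $A_1$ and $B_1$ are $\phi$-equivalent with respect to every $m\times n$ array.
   Context: Arrays are partially filled and toroidal, every row and column containing a filled cell; $F(X)$ is the set of filled cells. $s_R(i,j)=(i,j+t)$, $s_C(i,j)=(i+t,j)$ with $t\ge1$ minimal such that the cell is filled; the bishop's move is $s_C\circ s_R$. For arrays $Y$ and $X$ with the same number of columns, $[Y\mid X]^T$ denotes the array obtained by placing $Y$ above $X$; cells of $X$ are identified with their copies in it. Given a move function $\phi$ on $[A_1\mid X]^T$ and $\sigma$ on $[B_1\mid X]^T$, let $\phi_2:F(X)\to F(X)$, $\phi_2(x)=\phi^t(x)$ with $t\ge1$ minimal such that $\phi^t(x)\in X$, and similarly $\sigma_2$. $A_1$ and $B_1$ are $(\phi,\sigma)$-equivalent with respect to $X$ if for every $x\in F(X)$: $\phi(x)\notin X\iff\sigma(x)\notin X$, and if $\phi(x),\sigma(x)\notin X$ then $\phi_2(x)=\sigma_2(x)$. When $\phi$ and $\sigma$ are both the bishop's move this is called $\phi$-equivalence. *)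

From mathcomp Require Import all_boot.
Set Implicit Arguments. Unset Strict Implicit. Unset Printing Implicit Defensive.

(* An array with R rows and n columns is given by its set of filled cells
   F : {set 'I_R * 'I_n}; a cell is (row, column). *)

Definition is_array (R n : nat) (F : {set 'I_R * 'I_n}) : Prop :=
  (forall i : 'I_R, exists j : 'I_n, (i, j) \in F) /\
  (forall j : 'I_n, exists i : 'I_R, (i, j) \in F).

Lemma ord_pos (n : nat) (j : 'I_n) : 0 < n.
Proof. by case: n j => [[]|]. Qed.

Definition cshift (n : nat) (j : 'I_n) (t : nat) : 'I_n :=
  Ordinal (ltn_pmod (j + t) (ord_pos j)).

(* s_R(i,j) = (i, j+t) with t >= 1 minimal such that the cell is filled.
   For a filled cell, t = n works, so the minimal t lies in 1..n, and
   (find ... (iota 1 n)).+1 is exactly that minimal t. *)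
Definition sR (R n : nat) (F : {set 'I_R * 'I_n}) (x : 'I_R * 'I_n) : 'I_R * 'I_n :=
  let t := (find (fun t => (x.1, cshift x.2 t) \in F) (iota 1 n)).+1 in
  (x.1, cshift x.2 t).

Definition sC (R n : nat) (F : {set 'I_R * 'I_n}) (x : 'I_R * 'I_n) : 'I_R * 'I_n :=
  let t := (find (fun t => (cshift x.1 t, x.2) \in F) (iota 1 R)).+1 in
  (cshift x.1 t, x.2).

Definition bishop (R n : nat) (F : {set 'I_R * 'I_n}) (x : 'I_R * 'I_n) : 'I_R * 'I_n :=
  sC F (sR F x).

(* [Y | X]^T : Y (r rows) placed above X (m rows). *)
Definition stack (r m n : nat) (Y : {set 'I_r * 'I_n}) (X : {set 'I_m * 'I_n})
  : {set 'I_(r + m) * 'I_n} :=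
  [set p | match split p.1 with
           | inl i => (i, p.2) \in Y
           | inr i => (i, p.2) \in X
           end].

Definition embed (r m n : nat) (x : 'I_m * 'I_n) : 'I_(r + m) * 'I_n :=
  (rshift r x.1, x.2).

Definition inX (r R n : nat) (p : 'I_R * 'I_n) : bool := r <= p.1.

Definition coordX (r R n : nat) (p : 'I_R * 'I_n) : nat * nat := (p.1 - r, nat_of_ord p.2).

(* When f is a permutation
   of the R*n cells (or of the filled cells) and P x holds, this minimal t is
   at most R*n, so searching t in 1..R*n gives exactly the minimal t. *)
Definition first_return (R n : nat) (f : 'I_R * 'I_n -> 'I_R * 'I_n)
  (P : pred ('I_R * 'I_n)) (x : 'I_R * 'I_n) : 'I_R * 'I_n :=
  iter (find (fun t => P (iter t f x)) (iota 1 (R * n))).+1 f x.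

Definition phi2 (r m n : nat) (Y : {set 'I_r * 'I_n}) (X : {set 'I_m * 'I_n})
  (x : 'I_m * 'I_n) : 'I_(r + m) * 'I_n :=
  first_return (bishop (stack Y X)) (@inX r (r + m) n) (embed r x).

Definition phi_equiv (r1 r2 m n : nat) (A : {set 'I_r1 * 'I_n}) (B : {set 'I_r2 * 'I_n})
  (X : {set 'I_m * 'I_n}) : Prop :=
  forall x : 'I_m * 'I_n, x \in X ->
    let pa := bishop (stack A X) (embed r1 x) in
    let pb := bishop (stack B X) (embed r2 x) in
    (~~ inX r1 pa <-> ~~ inX r2 pb) /\
    (~~ inX r1 pa -> ~~ inX r2 pb ->
       coordX r1 (phi2 A X x) = coordX r2 (phi2 B X x)).

From mathcomp Require Import all_boot zify.
Set Implicit Arguments. Unset Strict Implicit. Unset Printing Implicit Defensive.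

(* Starting from a cell x of X, the bishop's move on [Y | X] first moves along the row
   of x, inside X, to some column c; whether the following column move stays in X, and
   where it lands if it does, depends on X alone.  Otherwise it enters Y at the top
   filled cell of column c, and from there the orbit stays in Y, independently of X,
   until it drops out of the bottom of Y in some column c1 and enters X at the top
   filled cell of column c1.  So phi_2(x) is determined by X and an exit column c1 that
   depends only on Y and c.  In the full array J every column c is reached this way,
   from the cell of the last row just before c, and there phi_2 records c1 itself; so
   phi-equivalence with respect to J makes the exit columns of A1 and B1 agree, and
   with them phi_2 on every X. *)

Lemma cshift_small n (j : 'I_n) t : j + t < n -> cshift j t = j + t :> nat.
Proof. exact: modn_small. Qed.

Lemma cshift_wrap n (j : 'I_n) t : t <= n -> n <= j + t -> cshift j t = j + t - n :> nat.
Proof.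
move=> tn nle; rewrite /= -{1}(subnK nle) modnDr modn_small //.
by have := ltn_ord j; lia.
Qed.

Lemma cshift0 n (j : 'I_n) : cshift j 0 = j.
Proof. by apply: val_inj; rewrite /= addn0 modn_small. Qed.

Lemma cshiftn n (j : 'I_n) : cshift j n = j.
Proof. by apply: val_inj; rewrite /= modnDr modn_small. Qed.

Lemma cshiftD n (j : 'I_n) s t : cshift (cshift j s) t = cshift j (s + t).
Proof. by apply: val_inj; rewrite /= modnDml addnA. Qed.

Lemma cshift_sub n (i j : 'I_n) s t :
  cshift i s = cshift j t -> s <= t -> cshift j (t - s) = i.
Proof.
move=> /(congr1 val) /= E st; apply: val_inj => /=.
rewrite -[RHS](modn_small (ltn_ord i)); apply/eqP.
by rewrite -(eqn_modDr s) -addnA subnK // E.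
Qed.

Lemma find_first_index (T : eqType) (p : pred T) s k x0 : k < size s -> p (nth x0 s k) ->
  (forall t, t < k -> ~~ p (nth x0 s t)) -> find p s = k.
Proof.
move=> ks pk H.
have hs : has p s by apply/hasP; exists (nth x0 s k) => //; exact: mem_nth.
case: (ltngtP (find p s) k) => // h.
- by have := nth_find x0 hs; rewrite (negbTE (H _ h)).
- by have := before_find x0 h; rewrite pk.
Qed.

Section CyclicNext.
Variables (R : nat) (P : pred 'I_R).

Definition cyclic_next (i : 'I_R) : 'I_R :=
  cshift i (find (fun t => P (cshift i t)) (iota 1 R)).+1.

Lemma cyclic_next_char i d : 0 < d <= R -> P (cshift i d) ->
  (forall t, 0 < t < d -> ~~ P (cshift i t)) -> cyclic_next i = cshift i d.
Proof.
move=> /andP [d0 dR] Pd Hd; rewrite /cyclic_next (@find_first_index _ _ _ d.-1 0).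
- by rewrite prednK.
- by rewrite size_iota; lia.
- by rewrite nth_iota ?add1n ?prednK //; lia.
- by move=> t tlt; rewrite nth_iota; [apply: Hd | ]; lia.
Qed.

Lemma cyclic_next_spec i : P i -> exists2 d, 0 < d <= R &
  [/\ cyclic_next i = cshift i d, P (cshift i d) & forall t, 0 < t < d -> ~~ P (cshift i t)].
Proof.
move=> Pi; have ex : exists d, (0 < d <= R) && P (cshift i d).
  by exists R; rewrite (ord_pos i) leqnn cshiftn.
case: (ex_minnP ex) => d /andP [dR Pd] dmin; exists d => //.
have Hd t : 0 < t < d -> ~~ P (cshift i t).
  by move=> td; apply/negP => Pt; have := dmin t; rewrite Pt andbT; lia.
by split=> //; apply: cyclic_next_char.
Qed.

Lemma cyclic_next_in i : P i -> P (cyclic_next i).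
Proof. by case/cyclic_next_spec => d _ [-> ]. Qed.

Lemma cyclic_next_inj i1 i2 : P i1 -> P i2 -> cyclic_next i1 = cyclic_next i2 -> i1 = i2.
Proof.
move=> P1 P2; have [d1 /andP [d1_gt0 _] [-> _ H1]] := cyclic_next_spec P1.
have [d2 /andP [d2_gt0 _] [-> _ H2]] := cyclic_next_spec P2; move=> E.
case: (ltngtP d1 d2) => [lt|gt|eq].
- by have /negP[] := H2 (d2 - d1) ltac:(lia); rewrite (cshift_sub E) // ltnW.
- by have /negP[] := H1 (d1 - d2) ltac:(lia); rewrite (cshift_sub (esym E)) // ltnW.
- by move: (cshift_sub E); rewrite eq subnn cshift0 => ->.
Qed.

Lemma cyclic_next_fwd (i j : 'I_R) : i < j -> P j ->
  (forall k : 'I_R, i < k < j -> ~~ P k) -> cyclic_next i = j.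
Proof.
move=> ij Pj H; have jR := ltn_ord j.
have E : cshift i (j - i) = j by apply: ord_inj; rewrite cshift_small; lia.
rewrite -E; apply: cyclic_next_char => [||t td]; [lia | by rewrite E | ].
by apply: H; rewrite cshift_small; lia.
Qed.

Lemma cyclic_next_wrap (i j : 'I_R) : j <= i -> P j -> (forall k : 'I_R, i < k -> ~~ P k) ->
  (forall k : 'I_R, k < j -> ~~ P k) -> cyclic_next i = j.
Proof.
move=> ji Pj Hi Hj; have iR := ltn_ord i.
have E : cshift i (R - i + j) = j by apply: ord_inj; rewrite cshift_wrap; lia.
rewrite -E; apply: cyclic_next_char => [||t td]; [lia | by rewrite E | ].
case: (ltnP (i + t) R) => itR.
- by apply: Hi; rewrite cshift_small; lia.
- by apply: Hj; rewrite cshift_wrap; lia.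
Qed.
End CyclicNext.

Lemma iter_return (T : finType) (D : {pred T}) (f : T -> T) x :
  {in D, forall y, f y \in D} -> {in D &, injective f} -> x \in D ->
  exists2 t, 0 < t <= #|T| & iter t f x = x.
Proof.
move=> fD finj xD.
have iterD t : iter t f x \in D by elim: t => // t IH; rewrite iterS fD.
have iter_cancel s d : iter s f x = iter (s + d) f x -> iter d f x = x.
  elim: s => [|s IH]; first by rewrite add0n => /esym.
  by rewrite addSn !iterS => /finj E; apply/IH/E; rewrite iterD.
pose g (s : 'I_#|T|.+1) := iter s f x.
have /injectivePn [s1 [s2 ne12 E]] : ~~ injectiveb g.
  by apply/injectiveP => /leq_card; rewrite card_ord ltnn.
have := ltn_ord s1; have := ltn_ord s2.
case: (ltngtP s1 s2) => [lt|gt|eq] ? ?; last by rewrite (ord_inj eq) eqxx in ne12.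
- by exists (s2 - s1); [lia | apply: (iter_cancel s1); rewrite subnKC // ltnW].
- by exists (s1 - s2); [lia | apply: (iter_cancel s2); rewrite subnKC // ltnW].
Qed.

Section BishopPermutation.
Variables (R n : nat) (F : {set 'I_R * 'I_n}).

Lemma sR_in x : x \in F -> sR F x \in F.
Proof. by case: x => i j /(cyclic_next_in (P := fun c => (i, c) \in F)). Qed.

Lemma sC_in x : x \in F -> sC F x \in F.
Proof. by case: x => i j /(cyclic_next_in (P := fun c => (c, j) \in F)). Qed.

Lemma sR_inj : {in F &, injective (sR F)}.
Proof.
move=> [i j] [i' j'] xF yF E; have ii' : i = i' := congr1 fst E; subst i'.
by congr pair; apply: (cyclic_next_inj (P := fun c => (i, c) \in F) xF yF (congr1 snd E)).
Qed.

Lemma sC_inj : {in F &, injective (sC F)}.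
Proof.
move=> [i j] [i' j'] xF yF E; have jj' : j = j' := congr1 snd E; subst j'.
by congr pair; apply: (cyclic_next_inj (P := fun c => (c, j) \in F) xF yF (congr1 fst E)).
Qed.

Lemma bishop_in x : x \in F -> bishop F x \in F.
Proof. by move=> xF; apply/sC_in/sR_in. Qed.

Lemma bishop_inj : {in F &, injective (bishop F)}.
Proof. by move=> x y xF yF /sC_inj/sR_inj; apply; rewrite ?sR_in. Qed.

Lemma bishop_return x : x \in F -> exists2 t, 0 < t <= R * n & iter t (bishop F) x = x.
Proof.
have -> : R * n = #|{: 'I_R * 'I_n}| by rewrite card_prod !card_ord.
exact: (iter_return bishop_in bishop_inj).
Qed.
End BishopPermutation.

Lemma first_return_min R n (f : 'I_R * 'I_n -> 'I_R * 'I_n) (P : pred ('I_R * 'I_n)) e t U :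
  P e -> 0 < t <= R * n -> iter t f e = e -> P (iter U f (f e)) ->
  (forall s, s < U -> ~~ P (iter s f (f e))) -> first_return f P e = iter U f (f e).
Proof.
move=> Pe /andP [t_gt0 tRn] te PU Hmin.
have Ut : U < t.
  rewrite ltnNge; apply/negP => tU; have /negP[] := Hmin t.-1 ltac:(lia).
  by rewrite -iterSr prednK // te.
have URn : U < R * n by lia.
rewrite /first_return (@find_first_index _ _ _ U 0) ?size_iota ?nth_iota ?add1n ?iterSr //.
by move=> s sU; rewrite nth_iota ?add1n ?iterSr; [apply: Hmin | lia].
Qed.

Lemma sR_cyclic_next R n (F : {set 'I_R * 'I_n}) x :
  sR F x = (x.1, cyclic_next (fun c => (x.1, c) \in F) x.2).
Proof. by []. Qed.

Lemma sC_cyclic_next R n (F : {set 'I_R * 'I_n}) x :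
  sC F x = (cyclic_next (fun i => (i, x.2) \in F) x.1, x.2).
Proof. by []. Qed.

Lemma sR_full R n (x : 'I_R * 'I_n) : sR [set: 'I_R * 'I_n] x = (x.1, cshift x.2 1).
Proof.
rewrite sR_cyclic_next; congr pair.
apply: cyclic_next_char => [||[|t] //]; last by rewrite inE.
by rewrite (ord_pos x.2).
Qed.

Lemma exists_least_ord R (P : pred 'I_R) j : P j ->
  exists2 k, P k & forall k' : 'I_R, k' < k -> ~~ P k'.
Proof.
move=> Pj; case: (arg_minnP (P := P) (fun k : 'I_R => nat_of_ord k) Pj) => k Pk kmin.
by exists k => // k' lt; apply/negP => /kmin; rewrite leqNgt lt.
Qed.

Lemma exists_next_ord R (P : pred 'I_R) (i j : 'I_R) : i < j -> P j ->
  exists k : 'I_R, [/\ i < k, P k & forall k' : 'I_R, i < k' < k -> ~~ P k'].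
Proof.
move=> ij Pj; have [|k /andP [ik Pk] kmin] := @exists_least_ord _ (fun k => (i < k) && P k) j.
  by rewrite /= ij Pj.
by exists k; split=> // k' /andP [ik' k'k]; have := kmin k' k'k; rewrite ik'.
Qed.

Definition column_top m n (X : {set 'I_m * 'I_n}) (c : 'I_n) (k : 'I_m) : Prop :=
  (k, c) \in X /\ forall k' : 'I_m, k' < k -> (k', c) \notin X.

Lemma exists_column_top m n (X : {set 'I_m * 'I_n}) c :
  (exists k, (k, c) \in X) -> exists k, column_top X c k.
Proof. by case=> k /(@exists_least_ord _ (fun k => (k, c) \in X)) [k' ? ?]; exists k'. Qed.

Lemma column_top_uniq m n (X : {set 'I_m * 'I_n}) c k k' :
  column_top X c k -> column_top X c k' -> k = k'.
Proof.
move=> [kX kmin] [k'X k'min]; apply: ord_inj.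
by case: (ltngtP k k') => // [/k'min | /kmin]; rewrite ?kX ?k'X.
Qed.

Lemma inX_lshift r m n (a : 'I_r) (c : 'I_n) : inX r (lshift m a, c) = false.
Proof. by rewrite /inX /= leqNgt ltn_ord. Qed.

Lemma inX_rshift r m n (k : 'I_m) (c : 'I_n) : inX r (rshift r k, c).
Proof. exact: leq_addr. Qed.

Lemma coordX_rshift r m n (k : 'I_m) (c : 'I_n) :
  coordX r (rshift r k, c) = (nat_of_ord k, nat_of_ord c).
Proof. by rewrite /coordX /= addKn. Qed.

Section Stack.
Variables (r m n : nat) (Y : {set 'I_r * 'I_n}).

Lemma mem_stack_lshift (X : {set 'I_m * 'I_n}) a c :
  ((lshift m a, c) \in stack Y X) = ((a, c) \in Y).
Proof. by rewrite inE /= (unsplitK (inl _ a)). Qed.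

Lemma mem_stack_rshift (X : {set 'I_m * 'I_n}) k c :
  ((rshift r k, c) \in stack Y X) = ((k, c) \in X).
Proof. by rewrite inE /= (unsplitK (inr _ k)). Qed.

Lemma sR_stack_lshift (X : {set 'I_m * 'I_n}) a c :
  sR (stack Y X) (lshift m a, c) = (lshift m a, (sR Y (a, c)).2).
Proof. by rewrite /sR (eq_find (fun t => mem_stack_lshift X a (cshift c t))). Qed.

Lemma sR_stack_embed (X : {set 'I_m * 'I_n}) x : sR (stack Y X) (embed r x) = embed r (sR X x).
Proof. by rewrite /sR (eq_find (fun t => mem_stack_rshift X x.1 (cshift x.2 t))). Qed.

Section ColumnMove.
Variable X : {set 'I_m * 'I_n}.
Local Notation S := (stack Y X).

Lemma sC_stack_Y_down (a a1 : 'I_r) c : a < a1 -> (a1, c) \in Y ->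
  (forall b : 'I_r, a < b < a1 -> (b, c) \notin Y) -> sC S (lshift m a, c) = (lshift m a1, c).
Proof.
move=> aa1 Ya1 between; rewrite sC_cyclic_next; congr pair.
apply: cyclic_next_fwd => [|/=|k]; rewrite ?mem_stack_lshift //.
case: (split_ordP k) => [b ->|k' -> /andP [_ /=]].
  by rewrite mem_stack_lshift; apply: between.
by have := ltn_ord a1; lia.
Qed.

Lemma sC_stack_Y_exit (a : 'I_r) (k : 'I_m) c : (forall b : 'I_r, a < b -> (b, c) \notin Y) ->
  column_top X c k -> sC S (lshift m a, c) = (rshift r k, c).
Proof.
move=> below [kX kmin]; rewrite sC_cyclic_next; congr pair.
apply: cyclic_next_fwd => [/=|/=|k'']; rewrite ?mem_stack_rshift //.
  by have := ltn_ord a; lia.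
case: (split_ordP k'') => [b -> /andP [ab _]|k' -> /andP [_ /=]].
- by rewrite mem_stack_lshift; apply: below.
- by rewrite mem_stack_rshift ltn_add2l; apply: kmin.
Qed.

Lemma sC_stack_X_down (i k : 'I_m) c : i < k -> (k, c) \in X ->
  (forall k' : 'I_m, i < k' < k -> (k', c) \notin X) -> sC S (rshift r i, c) = (rshift r k, c).
Proof.
move=> ik kX between; rewrite sC_cyclic_next; congr pair.
apply: cyclic_next_fwd => [/=|/=|k'']; rewrite ?mem_stack_rshift ?ltn_add2l //.
case: (split_ordP k'') => [b -> /andP [/= ib _]|k' -> /=].
- by have := ltn_ord b; lia.
- by rewrite mem_stack_rshift !ltn_add2l; apply: between.
Qed.

Lemma sC_stack_X_exit (i : 'I_m) (a : 'I_r) c : (forall k : 'I_m, i < k -> (k, c) \notin X) ->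
  column_top Y c a -> sC S (rshift r i, c) = (lshift m a, c).
Proof.
move=> below [aY amin]; rewrite sC_cyclic_next; congr pair.
apply: cyclic_next_wrap => [/=|/=|k''|k'']; rewrite ?mem_stack_lshift //.
- by have := ltn_ord a; lia.
- case: (split_ordP k'') => [b -> /= ib|k' -> /=]; first by have := ltn_ord b; lia.
  by rewrite mem_stack_rshift ltn_add2l; apply: below.
- case: (split_ordP k'') => [b -> /= ba|k' -> /= k'a]; first by rewrite mem_stack_lshift amin.
  by have := ltn_ord a; lia.
Qed.
End ColumnMove.

Lemma bishop_embed_down (X : {set 'I_m * 'I_n}) x i c (k : 'I_m) : sR X x = (i, c) ->
  i < k -> (k, c) \in X -> (forall k' : 'I_m, i < k' < k -> (k', c) \notin X) ->
  bishop (stack Y X) (embed r x) = (rshift r k, c).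
Proof. by move=> Ex ik kX between; rewrite /bishop sR_stack_embed Ex (sC_stack_X_down ik). Qed.

Lemma bishop_embed_exit (X : {set 'I_m * 'I_n}) x i c a : sR X x = (i, c) ->
  (forall k : 'I_m, i < k -> (k, c) \notin X) -> column_top Y c a ->
  bishop (stack Y X) (embed r x) = (lshift m a, c).
Proof.
by move=> Ex below top; rewrite /bishop sR_stack_embed Ex (sC_stack_X_exit below top).
Qed.

Lemma bishop_stack_lshift (a : 'I_r) c :
  (exists q : 'I_r * 'I_n, forall X : {set 'I_m * 'I_n},
     bishop (stack Y X) (lshift m a, c) = (lshift m q.1, q.2)) \/
  (exists c1, forall (X : {set 'I_m * 'I_n}) k, column_top X c1 k ->
     bishop (stack Y X) (lshift m a, c) = (rshift r k, c1)).
Proof.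
rewrite /bishop; set c1 := (sR Y (a, c)).2.
case: (boolP [exists b : 'I_r, (a < b) && ((b, c1) \in Y)]) =>
  [/existsP [b /andP [ab bY]] | /existsPn below].
- have [a1 [aa1 a1Y between]] := exists_next_ord (P := fun b => (b, c1) \in Y) ab bY.
  by left; exists (a1, c1) => X; rewrite sR_stack_lshift (sC_stack_Y_down _ aa1).
- right; exists c1 => X k top; rewrite sR_stack_lshift (sC_stack_Y_exit _ top) // => b ab.
  by have := below b; rewrite ab.
Qed.
End Stack.

Section ExitFromY.
Variables (r m n : nat) (Y : {set 'I_r * 'I_n}) (X1 X2 : {set 'I_m * 'I_n}).
Hypotheses (X1_cols : forall c : 'I_n, exists k, (k, c) \in X1)
           (X2_cols : forall c : 'I_n, exists k, (k, c) \in X2).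
Variables (a0 : 'I_r) (c0 : 'I_n).
Local Notation f1 := (bishop (stack Y X1)).
Local Notation f2 := (bishop (stack Y X2)).
Local Notation p := (lshift m a0, c0).

Lemma iter_bishop_lshift s : (forall s', s' <= s -> ~~ inX r (iter s' f1 p)) ->
  exists q : 'I_r * 'I_n,
    iter s f1 p = (lshift m q.1, q.2) /\ iter s f2 p = (lshift m q.1, q.2).
Proof.
elim: s => [|s IH] stay; first by exists (a0, c0).
have [q [E1 E2]] := IH (fun s' le => stay s' (leqW le)).
rewrite !iterS E1 E2; case: (bishop_stack_lshift m Y q.1 q.2) => [[q' Hq] | [c1 Hc1]].
- by exists q'; rewrite !Hq.
- have [k1 top1] := exists_column_top (X1_cols c1).
  by have := stay s.+1 (leqnn _); rewrite iterS E1 (Hc1 _ _ top1) inX_rshift.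
Qed.

Lemma exit_from_lshift : (exists s, inX r (iter s f1 p)) ->
  exists U c1 k1 k2, [/\ column_top X1 c1 k1, column_top X2 c1 k2,
    iter U f1 p = (rshift r k1, c1), iter U f2 p = (rshift r k2, c1) &
    forall s, s < U -> ~~ inX r (iter s f1 p) /\ ~~ inX r (iter s f2 p)].
Proof.
move=> ex; case: (ex_minnP ex) => U exitU Umin.
have stay s : s < U -> ~~ inX r (iter s f1 p) by move=> sU; apply/negP => /Umin; lia.
have U_gt0 : 0 < U by case: U exitU {Umin stay} => //=; rewrite inX_lshift.
have [q [E1 E2]] := iter_bishop_lshift (s := U.-1) (fun s le => stay s ltac:(lia)).
move: exitU; rewrite -(prednK U_gt0) iterS E1.
case: (bishop_stack_lshift m Y q.1 q.2) => [[q' ->]|[c1 Hc1] _]; first by rewrite inX_lshift.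
have [k1 top1] := exists_column_top (X1_cols c1).
have [k2 top2] := exists_column_top (X2_cols c1).
exists U, c1, k1, k2; split => //.
- by rewrite -(prednK U_gt0) iterS E1 (Hc1 _ _ top1).
- by rewrite -(prednK U_gt0) iterS E2 (Hc1 _ _ top2).
- move=> s sU.
  have [q' [-> ->]] := iter_bishop_lshift (s := s) (fun s' le => stay s' ltac:(lia)).
  by rewrite !inX_lshift.
Qed.
End ExitFromY.

Section FirstReturn.
Variables (r m n : nat) (Y : {set 'I_r * 'I_n}) (X : {set 'I_m * 'I_n}) (x : 'I_m * 'I_n).
Hypothesis xX : x \in X.
Local Notation f := (bishop (stack Y X)).

Lemma bishop_return_embed : exists2 t, 0 < t <= (r + m) * n & iter t f (embed r x) = embed r x.
Proof. by apply: bishop_return; case: x xX => i j; rewrite /embed mem_stack_rshift. Qed.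

Lemma embed_returns : exists s, inX r (iter s f (f (embed r x))).
Proof.
have [t /andP [t_gt0 _] ret] := bishop_return_embed.
by exists t.-1; rewrite -iterSr prednK // ret inX_rshift.
Qed.

Lemma phi2_first_exit U : inX r (iter U f (f (embed r x))) ->
  (forall s, s < U -> ~~ inX r (iter s f (f (embed r x)))) ->
  phi2 Y X x = iter U f (f (embed r x)).
Proof.
have [t t_bd ret] := bishop_return_embed.
by apply: first_return_min t_bd ret; apply: inX_rshift.
Qed.
End FirstReturn.

Lemma phi2_exit_pair r m n (Y : {set 'I_r * 'I_n}) (X1 X2 : {set 'I_m * 'I_n}) x1 x2 a c :
  (forall c : 'I_n, exists k, (k, c) \in X1) -> (forall c : 'I_n, exists k, (k, c) \in X2) ->
  x1 \in X1 -> x2 \in X2 ->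
  bishop (stack Y X1) (embed r x1) = (lshift m a, c) ->
  bishop (stack Y X2) (embed r x2) = (lshift m a, c) ->
  exists c1 k1 k2, [/\ column_top X1 c1 k1, column_top X2 c1 k2,
    phi2 Y X1 x1 = (rshift r k1, c1) & phi2 Y X2 x2 = (rshift r k2, c1)].
Proof.
move=> cols1 cols2 x1X x2X E1 E2.
have ex : exists s, inX r (iter s (bishop (stack Y X1)) (lshift m a, c)).
  by rewrite -E1; apply: embed_returns.
have [U [c1 [k1 [k2 [top1 top2 I1 I2 before]]]]] := exit_from_lshift cols1 cols2 ex.
exists c1, k1, k2; split => //.
- by rewrite (phi2_first_exit x1X (U := U)) E1 ?I1 ?inX_rshift // => s /before [].
- by rewrite (phi2_first_exit x2X (U := U)) E2 ?I2 ?inX_rshift // => s /before [].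
Qed.

Theorem proposition4p2 (r1 r2 m n : nat)
  (A1 : {set 'I_r1 * 'I_n}) (B1 : {set 'I_r2 * 'I_n}) :
  is_array A1 -> is_array B1 ->
  phi_equiv A1 B1 [set: 'I_m * 'I_n] ->
  forall X : {set 'I_m * 'I_n}, is_array X -> phi_equiv A1 B1 X.
Proof.
move=> [_ A1_cols] [_ B1_cols] equivJ X [_ X_cols] x xX.
case Ex: (sR X x) => [i c].
case: (boolP [exists k : 'I_m, (i < k) && ((k, c) \in X)]) =>
  [/existsP [k /andP [ik kX]] | /existsPn noX].
  have [k1 [ik1 k1X between]] := exists_next_ord (P := fun k => (k, c) \in X) ik kX.
  by rewrite /= !(bishop_embed_down _ Ex ik1 k1X between) !inX_rshift.
have below (k : 'I_m) : i < k -> (k, c) \notin X by move=> ik; have := noX k; rewrite ik.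
have [a topA] := exists_column_top (A1_cols c).
have [b topB] := exists_column_top (B1_cols c).
have EA := bishop_embed_exit Ex below topA; have EB := bishop_embed_exit Ex below topB.
rewrite /= EA EB !inX_lshift; split => // _ _.
set J := [set: 'I_m * 'I_n].
have [i' i'_last] : exists i' : 'I_m, i'.+1 = m.
  have m_gt0 := ord_pos i; have lt : m.-1 < m by rewrite ltn_predL.
  by exists (Ordinal lt); rewrite /= prednK.
have J_cols (c' : 'I_n) : exists k, (k, c') \in J by exists i'; rewrite inE.
have ExJ : sR J (i', cshift c n.-1) = (i', c).
  by rewrite sR_full cshiftD addn1 prednK ?cshiftn // (ord_pos c).
have belowJ (k : 'I_m) : i' < k -> (k, c) \notin J by have := ltn_ord k; lia.
have EAJ := bishop_embed_exit ExJ belowJ topA; have EBJ := bishop_embed_exit ExJ belowJ topB.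
have [cA [kA [kA' [topXA _ -> phiAJ]]]] := phi2_exit_pair X_cols J_cols xX (in_setT _) EA EAJ.
have [cB [kB [kB' [topXB _ -> phiBJ]]]] := phi2_exit_pair X_cols J_cols xX (in_setT _) EB EBJ.
have [_] := equivJ (i', cshift c n.-1) (in_setT _).
rewrite /= EAJ EBJ phiAJ phiBJ !inX_lshift !coordX_rshift => /(_ isT isT) [_ /ord_inj eqc].
by subst cB; rewrite (column_top_uniq topXA topXB).
Qed.
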